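(* Let $\mathbf{k}$ be a commutative ring and $H$ a commutative connected graded $\mathbf{k}$-Hopf algebra with antipode $S_H$. Let $\beta_H:H\to H\otimes\mathrm{QSym}_{\mathbf{k}}$ be given by $\beta_H(h)=\sum_{\alpha\in\mathrm{Comp}}\xi_\alpha(h)\otimes M_\alpha$. Then $$S_H=(\mathrm{id}_H\otimes(\varepsilon_P\circ S_{\mathrm{QSym}_{\mathbf{k}}}))\circ\beta_H,$$ where $S_{\mathrm{QSym}_{\mathbf{k}}}$ is the antipode of $\mathrm{QSym}_{\mathbf{k}}$ and $H\otimes\mathbf{k}$ is identified with $H$.
   Context: A composition is a finite sequence of positive integers; $\mathrm{Comp}$ the set of compositions. $\mathrm{QSym}_{\mathbf{k}}\subseteq\mathbf{k}[[x_1,x_2,\ldots]]$ is the Hopf algebra of quasisymmetric functions with monomial basis $M_\alpha=\sum_{1\le i_1<\cdots<i_\ell}x_{i_1}^{\alpha_1}\cdots x_{i_\ell}^{\alpha_\ell}$ for $\alpha=(\alpha_1,\ldots,\alpha_\ell)$. $\varepsilon_P:\mathrm{QSym}_{\mathbf{k}}\to\mathbf{k}$ is $f\mapsto f(1,0,0,\ldots)$. For $\alpha=(a_1,\ldots,a_k)$, $\xi_\alpha=m^{(k-1)}\circ\pi_\alpha\circ\Delta^{(k-1)}:H\to H$, where $\Delta^{(k-1)}:H\to H^{\otimes k}$ is the iterated comultiplication ($\Delta^{(-1)}=\varepsilon$, $\Delta^{(0)}=\mathrm{id}$, $\Delta^{(k)}=(\mathrm{id}\otimes\Delta^{(k-1)})\circ\Delta$),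 $m^{(k-1)}:H^{\otimes k}\to H$ is $h_1\otimes\cdots\otimes h_k\mapsto h_1\cdots h_k$ ($m^{(-1)}$ the unit), and $\pi_\alpha=\pi_{a_1}\otimes\cdots\otimes\pi_{a_k}$ with $\pi_n:H\to H$ the projection onto the degree-$n$ component $H_n$. The sum defining $\beta_H(h)$ has finitely many nonzero terms. *)

From mathcomp Require Import all_boot all_order all_algebra.
Set Implicit Arguments. Unset Strict Implicit. Unset Printing Implicit Defensive.
Import GRing.Theory.
Local Open Scope ring_scope.

Definition is_comp (a : seq nat) : bool := all (fun n => (0 < n)%N) a.

(* Tensor powers, represented by finite formal sums of pure tensors    *)
(* (each pure tensor u_1 (x) ... (x) u_n is a list [:: u_1; ..; u_n]). *)
(* Two formal sums represent the same element of H^{(x) n} iff every   *)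
(* k-multilinear map out of H^n into any k-module agrees on them       *)
(* (universal property of the tensor product).                         *)
Section Tensor.
Variables (k : comNzRingType) (H : lmodType k).

Definition multilinear (n : nat) (M : lmodType k) (f : seq H -> M) : Prop :=
  forall (l : seq H) (i : nat) (a : k) (x y : H), size l = n -> (i < n)%N ->
    f (set_nth 0 l i (a *: x + y)) =
    a *: f (set_nth 0 l i x) + f (set_nth 0 l i y).

Definition teq (n : nat) (s t : seq (seq H)) : Prop :=
  forall (M : lmodType k) (f : seq H -> M), multilinear n f ->
    \sum_(u <- s) f u = \sum_(u <- t) f u.

Definition t2 (s : seq (H * H)) : seq (seq H) := [seq [:: p.1; p.2] | p <- s].
End Tensor.

(*   delta h : a formal sum representing Delta(h) in H (x) H           *)
(*   pi n    : projection onto the degree-n component H_n              *)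
(*             (x \in H_n  <->  pi n x = x).                           *)
Section Hopf.
Variables (k : comNzRingType) (H : comAlgType k).
Variables (delta : H -> seq (H * H)) (eps : H -> k) (S : H -> H)
          (pi : nat -> H -> H).

Record is_cc_graded_hopf : Prop := {
  pi_lin : forall n a x y, pi n (a *: x + y) = a *: pi n x + pi n y;
  pi_proj : forall n m h, pi n (pi m h) = if n == m then pi n h else 0;
  pi_decomp : forall h, exists N : nat,
      (forall m, (N <= m)%N -> pi m h = 0) /\ h = \sum_(n < N) pi n h;
  pi_one : pi 0 1 = 1;
  pi_mul : forall i j x y, pi i x = x -> pi j y = y ->
      pi (i + j) (x * y) = x * y;
  connected : forall h, exists c : k, pi 0 h = c *: 1;
  eps_lin : forall a x y, eps (a *: x + y) = a * eps x + eps y;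
  delta_lin : forall a x y,
      teq 2 (t2 (delta (a *: x + y)))
            (t2 ([seq (a *: p.1, p.2) | p <- delta x] ++ delta y));
  coassoc : forall h,
      teq 3 (flatten [seq [seq [:: q.1; q.2; p.2] | q <- delta p.1] | p <- delta h])
            (flatten [seq [seq [:: p.1; q.1; q.2] | q <- delta p.2] | p <- delta h]);
  counit_l : forall h, \sum_(p <- delta h) eps p.1 *: p.2 = h;
  counit_r : forall h, \sum_(p <- delta h) eps p.2 *: p.1 = h;
  eps_graded : forall n h, (0 < n)%N -> pi n h = h -> eps h = 0;
  delta_graded : forall n h, pi n h = h ->
      teq 2 (t2 (delta h))
            (t2 (flatten [seq [seq (pi i p.1, pi (n - i) p.2) | i <- iota 0 n.+1]
                        | p <- delta h]));
  eps_one : eps 1 = 1;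
  eps_mul : forall x y, eps (x * y) = eps x * eps y;
  delta_one : teq 2 (t2 (delta 1)) [:: [:: 1; 1]];
  delta_mul : forall x y,
      teq 2 (t2 (delta (x * y)))
            (t2 (flatten [seq [seq (p.1 * q.1, p.2 * q.2) | q <- delta y]
                        | p <- delta x]));
  S_lin : forall a x y, S (a *: x + y) = a *: S x + S y;
  antipode_l : forall h, \sum_(p <- delta h) S p.1 * p.2 = eps h *: 1;
  antipode_r : forall h, \sum_(p <- delta h) p.1 * S p.2 = eps h *: 1
}.

(* Iterated comultiplication: delta_iter n = Delta^{(n)} : H -> H^{(x)(n+1)},
   Delta^{(0)} = id, Delta^{(n+1)} = (id (x) Delta^{(n)}) o Delta. *)
Fixpoint delta_iter (n : nat) (h : H) : seq (seq H) :=
  match n with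
  | 0 => [:: [:: h]]
  | n'.+1 => flatten [seq [seq p.1 :: t | t <- delta_iter n' p.2] | p <- delta h]
  end.

(* xi_alpha = m^{(l-1)} o pi_alpha o Delta^{(l-1)}, l = length of alpha;
   for alpha = empty: m^{(-1)} o eps = eps(-) 1_H. *)
Definition xi (alpha : seq nat) (h : H) : H :=
  match alpha with
  | [::] => eps h *: 1
  | _ => \sum_(t <- delta_iter (size alpha).-1 h)
           \prod_(i < size alpha) pi (nth 0%N alpha i) (nth 0 t i)
  end.
End Hopf.

(* QSym_k in its monomial basis.  An element is a finite formal sum    *)
(* sum_j c_j M_{alpha_j}, given as a list of pairs (c_j, alpha_j).     *)
Section QSym.
Variable k : comNzRingType.

Definition qsym := seq (k * seq nat).

Definition coefQ (f : qsym) (gamma : seq nat) : k :=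
  \sum_(p <- f | p.2 == gamma) p.1.

(* quasi-shuffle (stuffle): M_a M_b = sum_{g <- stuffle a b} M_g,
   the product of the power series M_a, M_b in k[[x_1,x_2,...]]. *)
Fixpoint stuffle (a b : seq nat) {struct a} : seq (seq nat) :=
  match a with
  | [::] => [:: b]
  | x :: a' =>
      let fix st (b : seq nat) : seq (seq nat) :=
        match b with
        | [::] => [:: a]
        | y :: b' => [seq x :: s | s <- stuffle a' b]
                     ++ [seq y :: s | s <- st b']
                     ++ [seq (x + y)%N :: s | s <- stuffle a' b']
        end in st b
  end.

Definition mulQ (f g : qsym) : qsym :=
  flatten [seq flatten [seq [seq (p.1 * q.1, s) | s <- stuffle p.2 q.2] | q <- g]
          | p <- f].

Definition sumQ (fs : seq qsym) : qsym := flatten fs.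

(* SQ alpha = S_QSym(M_alpha) (the antipode is determined by its values on
   the basis and extended k-linearly).  Coproduct of QSym: deconcatenation
   Delta(M_alpha) = sum_{i=0}^{l} M_{take i alpha} (x) M_{drop i alpha};
   counit M_alpha |-> [alpha = empty]; unit M_empty. *)
Definition is_QSym_antipode (SQ : seq nat -> qsym) : Prop :=
  (forall alpha, is_comp alpha -> all (fun p => is_comp p.2) (SQ alpha)) /\
  (forall alpha gamma, is_comp alpha -> is_comp gamma ->
     coefQ (sumQ [seq mulQ (SQ (take i alpha)) [:: (1, drop i alpha)]
                 | i <- iota 0 (size alpha).+1]) gamma
     = if (alpha == [::]) && (gamma == [::]) then 1 else 0) /\
  (forall alpha gamma, is_comp alpha -> is_comp gamma ->
     coefQ (sumQ [seq mulQ [:: (1, take i alpha)] (SQ (drop i alpha))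
                 | i <- iota 0 (size alpha).+1]) gamma
     = if (alpha == [::]) && (gamma == [::]) then 1 else 0).

(* eps_P(f) = f(1,0,0,...):  M_gamma(1,0,0,...) = 1 if l(gamma) <= 1, else 0
   (only the term i_1 = 1 survives, and it needs l(gamma) <= 1). *)
Definition M_at_e1 (gamma : seq nat) : k := (size gamma <= 1)%N%:R.
Definition epsP (f : qsym) : k := \sum_(p <- f) p.1 * M_at_e1 p.2.
End QSym.

Definition comp_fsum_eq (V : zmodType) (t : seq nat -> V) (v : V) : Prop :=
  (exists L : seq (seq nat),
      forall alpha, is_comp alpha -> t alpha != 0 -> alpha \in L) /\
  (forall L : seq (seq nat), uniq L -> all is_comp L ->
      (forall alpha, is_comp alpha -> t alpha != 0 -> alpha \in L) ->
      v = \sum_(alpha <- L) t alpha).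

From HB Require Import structures.
From mathcomp Require Import all_boot all_algebra zify.
Set Implicit Arguments. Unset Strict Implicit. Unset Printing Implicit Defensive.
Import GRing.Theory.
Local Open Scope ring_scope.

(* On the degree-n component, the relation m o (id (x) S) o Delta = u o eps
   gives S(z) = - sum_{j > 0} pi_j(z_(1)) S(pi_{n-j}(z_(2))); unrolling it yields
   Takeuchi's formula S = sum_alpha (-1)^{l(alpha)} xi_alpha over the compositions
   alpha of n.  On the QSym side, eps_P is multiplicative and sends M_alpha to 1
   if l(alpha) <= 1 and to 0 otherwise, so applying it to the antipode relation
   of QSym at M_alpha leaves eps_P(S M_alpha) + eps_P(S M_alpha') = [alpha = ()],
   alpha' being alpha with its last part removed; hence eps_P(S M_alpha) =
   (-1)^{l(alpha)} and the two expansions of S coincide. *)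

Section LinearHypothesis.
Variables (R : pzRingType) (U V : lmodType R) (f : U -> V).
Hypothesis f_lin : linear f.

Let fL : {linear U -> V} := HB.pack f (GRing.isLinear.Build R U V *:%R f f_lin).

Lemma lin0 : f 0 = 0. Proof. exact: (raddf0 fL). Qed.
Lemma linZ a x : f (a *: x) = a *: f x. Proof. exact: (linearZ_LR fL). Qed.
Lemma lin_sum (I : Type) (r : seq I) (P : pred I) (F : I -> U) :
  f (\sum_(i <- r | P i) F i) = \sum_(i <- r | P i) f (F i).
Proof. exact: (raddf_sum fL). Qed.

End LinearHypothesis.

Lemma big_if_eq (V : zmodType) (T : eqType) (r : seq T) (s : T) (X : V) :
  uniq r -> \sum_(m <- r) (if m == s then X else 0) = if s \in r then X else 0.
Proof.
move=> ur; rewrite -big_mkcond big_const_seq count_uniq_mem //.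
by case: (s \in r); rewrite /= ?addr0.
Qed.

Lemma big_eq_support (V : zmodType) (T : eqType) (P : pred T) (u : T -> V)
    (L1 L2 : seq T) :
  uniq L1 -> uniq L2 -> {subset L1 <= P} -> {subset L2 <= P} ->
  (forall a, P a -> u a != 0 -> a \in L1) ->
  (forall a, P a -> u a != 0 -> a \in L2) ->
  \sum_(a <- L1) u a = \sum_(a <- L2) u a.
Proof.
move=> u1 u2 P1 P2 s1 s2.
have nz L : \sum_(a <- L) u a = \sum_(a <- [seq a <- L | u a != 0]) u a.
  rewrite big_filter [LHS](bigID (fun a => u a != 0)) /=.
  by rewrite [X in (_ + X)%R]big1 ?addr0 // => a /negPn/eqP.
rewrite nz [RHS]nz; apply: perm_big; apply: uniq_perm; rewrite ?filter_uniq // => a.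
rewrite !mem_filter; have [//|ua /=] := eqVneq (u a) 0.
by apply/idP/idP => ha; [apply: s2 (P1 _ ha) ua | apply: s1 (P2 _ ha) ua].
Qed.

Fixpoint comps (f n : nat) {struct f} : seq (seq nat) :=
  if n is 0 then [:: [::]] else
  if f is f'.+1 then
    flatten [seq [seq j :: c | c <- comps f' (n - j)] | j <- iota 1 n]
  else [::].

Lemma compsSS f n : comps f.+1 n.+1 =
  [seq j :: c | j <- iota 1 n.+1, c <- comps f (n.+1 - j)].
Proof. by []. Qed.

Lemma mem_comps f n a :
  (a \in comps f n) = [&& is_comp a, sumn a == n & (size a <= f)%N].
Proof.
elim: f n a => [|f IH] [|n] a; try by case: a => [|[|x] a]; rewrite ?andbF.
rewrite compsSS; apply/allpairsPdep/and3P => [[j [c [jn + ->]]]|].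
  rewrite IH => /and3P [cc /eqP sc sz] /=; move: jn; rewrite mem_iota.
  by rewrite cc sc; split => //; [apply/eqP|]; lia.
case: a => [|x a] [ca /eqP sa sz] //; exists x, a; rewrite mem_iota IH.
by move: ca sa sz => /= /andP [x0 ->] sa sz; split => //; [|apply/eqP]; lia.
Qed.

Lemma comp_size_le_sumn a : is_comp a -> (size a <= sumn a)%N.
Proof. by elim: a => //= x a IH /andP [x0 /IH]; lia. Qed.

Lemma comps_uniq f n : uniq (comps f n).
Proof.
elim: f n => [|f IH] [|n] //.
apply: allpairs_uniq_dep => [|j _|[x y] [x' y'] _ _ /= [-> ->]] //.
exact: iota_uniq.
Qed.

Lemma eq_comp_fsum (V : zmodType) (t t' : seq nat -> V) (v : V) :
  (forall a, is_comp a -> t a = t' a) -> comp_fsum_eq t v -> comp_fsum_eq t' v.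
Proof.
move=> tt' [[L0 hL0] hv]; split=> [|L uL cL covL].
  by exists L0 => a ca; rewrite -tt' //; apply: hL0.
rewrite (hv L uL cL) => [|a ca]; last by rewrite tt' //; apply: covL.
by apply: eq_big_seq => a /(allP cL) ca; apply: tt'.
Qed.

Section CCGradedHopf.
Variables (k : comNzRingType) (H : comAlgType k).
Variables (delta : H -> seq (H * H)) (eps : H -> k) (S : H -> H)
          (pi : nat -> H -> H).
Hypothesis hH : is_cc_graded_hopf delta eps S pi.

Local Notation Xi := (xi delta eps pi).

Lemma pi_linear n : linear (pi n). Proof. exact: pi_lin hH n. Qed.
Lemma S_linear : linear S. Proof. exact: S_lin hH. Qed.
Lemma eps_linear : linear (eps : H -> k^o). Proof. exact: eps_lin hH. Qed.

Lemma pi_idem n x : pi n (pi n x) = pi n x.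
Proof. by rewrite (pi_proj hH) eqxx. Qed.

Lemma homog_decomp h :
  exists N, forall M, (N <= M)%N -> h = \sum_(n < M) pi n h.
Proof.
have [N [hN0 hN]] := pi_decomp hH h; exists N => M NM.
rewrite -(subnKC NM) big_split_ord /= [X in (_ + X)%R]big1 ?addr0 // => i _.
by apply: hN0; rewrite leq_addr.
Qed.

Lemma pi0_eps x : pi 0 x = eps x *: 1.
Proof.
have [c hc] := connected hH x; have [N hN] := homog_decomp x.
have eps_pi0 : eps x = eps (pi 0 x).
  rewrite {1}(hN N.+1) // (lin_sum eps_linear) big_ord_recl big1 ?addr0 //= => i _.
  by apply: (eps_graded hH (n := i.+1)); rewrite ?pi_idem.
have epsZ : eps (c *: 1) = c * eps 1 := linZ eps_linear c 1.
by rewrite eps_pi0 hc epsZ (eps_one hH) mulr1.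
Qed.

Lemma teq2_sum_mul (s t : seq (H * H)) (f g : H -> H) :
  linear f -> linear g -> teq 2 (t2 s) (t2 t) ->
  \sum_(p <- s) f p.1 * g p.2 = \sum_(p <- t) f p.1 * g p.2.
Proof.
move=> hf hg /(_ _ (fun l => f (nth 0 l 0) * g (nth 0 l 1))).
rewrite /t2 !big_map; apply=> l i a x y.
case: l => [|u [|v [|w l]]] //= _; case: i => [|[|i]] //= _.
  by rewrite hf mulrDl scalerAl.
by rewrite hg mulrDr scalerAr.
Qed.

Lemma delta_homog_sum n z (f g : H -> H) : pi n z = z -> linear f -> linear g ->
  \sum_(p <- delta z) f p.1 * g p.2 =
  \sum_(p <- delta z) \sum_(j <- iota 0 n.+1) f (pi j p.1) * g (pi (n - j) p.2).
Proof.
move=> hz hf hg; rewrite (teq2_sum_mul hf hg (delta_graded hH hz)).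
by rewrite big_flatten big_map; apply: eq_bigr => p _; rewrite big_map.
Qed.

Lemma delta_homog_pi n z i (g : H -> H) : pi n z = z -> linear g ->
  \sum_(p <- delta z) pi i p.1 * g p.2 =
  if (i <= n)%N then \sum_(p <- delta z) pi i p.1 * g (pi (n - i) p.2) else 0.
Proof.
move=> hz hg; rewrite (delta_homog_sum hz (pi_linear i) hg).
have inner p : \sum_(j <- iota 0 n.+1) pi i (pi j p.1) * g (pi (n - j) p.2) =
    if (i <= n)%N then pi i p.1 * g (pi (n - i) p.2) else 0.
  have -> : (i <= n)%N = (i \in iota 0 n.+1) by rewrite mem_iota.
  rewrite -big_if_eq ?iota_uniq //; apply: eq_bigr => j _.
  by rewrite (pi_proj hH) eq_sym; case: eqP => [->|_]; rewrite ?mul0r.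
by under eq_bigr do rewrite inner; case: leqP => _ //; apply: big1.
Qed.

Lemma xi_cons j a z : Xi (j :: a) z = \sum_(p <- delta z) pi j p.1 * Xi a p.2.
Proof.
case: a => [|b a].
  rewrite /xi /= big_seq1 big_ord1 -{1}(counit_r hH z) (lin_sum (pi_linear j)).
  by apply: eq_bigr => p _; rewrite (linZ (pi_linear j)) -scalerAr mulr1.
rewrite /xi /= big_flatten big_map; apply: eq_bigr => p _.
by rewrite big_map mulr_sumr; apply: eq_bigr => t _; rewrite big_ord_recl.
Qed.

Lemma xi_linear a : linear (Xi a).
Proof.
elim: a => [|j a IH] c x y; first by rewrite /xi (eps_lin hH) scalerDl scalerA.
rewrite !xi_cons (teq2_sum_mul (pi_linear j) IH (delta_lin hH c x y)).
rewrite big_cat big_map scaler_sumr; congr (_ + _); apply: eq_bigr => p _.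
by rewrite (linZ (pi_linear j)) scalerAl.
Qed.

Lemma xi_homog_eq0 a n y : pi n y = y -> sumn a != n -> Xi a y = 0.
Proof.
elim: a n y => [|j a IH] n y hy hn.
  by rewrite /xi (eps_graded hH _ hy) ?scale0r // lt0n eq_sym.
rewrite xi_cons (delta_homog_pi j hy (xi_linear a)).
case: leqP => // jn; rewrite big1 // => p _.
rewrite (IH (n - j)%N) ?mulr0 ?pi_idem //.
by apply: contra hn => /eqP e; rewrite /= e subnKC.
Qed.

Lemma xi_pi_sumn a z : Xi a z = Xi a (pi (sumn a) z).
Proof.
have [N hN] := homog_decomp z.
pose M := maxn N (sumn a).+1.
have lt_aM : (sumn a < M)%N by rewrite leq_maxr.
rewrite {1}(hN M) ?leq_maxl // (lin_sum (xi_linear a)).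
rewrite (bigD1 (Ordinal lt_aM)) //= big1 ?addr0 // => m ne.
apply: (xi_homog_eq0 (pi_idem m z)); apply: contra ne => /eqP e.
by apply/eqP; apply: val_inj.
Qed.

Lemma xi_cons_homog n z j c : pi n z = z -> (j <= n)%N ->
  Xi (j :: c) z = \sum_(p <- delta z) pi j p.1 * Xi c (pi (n - j) p.2).
Proof. by move=> hz jn; rewrite xi_cons (delta_homog_pi j hz (xi_linear c)) jn. Qed.

Lemma antipode_homog n z : pi n z = z ->
  S z + \sum_(j <- iota 1 n) \sum_(p <- delta z) pi j p.1 * S (pi (n - j) p.2)
  = eps z *: 1.
Proof.
move=> hz; rewrite -(antipode_r hH z) (delta_homog_sum hz (f := id) _ S_linear) //.
under [RHS]eq_bigr do rewrite big_cons.
rewrite big_split /= [X in (_ + X)%R]exchange_big; congr (_ + _).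
under eq_bigr do rewrite pi0_eps -scalerAl mul1r subn0.
rewrite -{1}hz -{1}(counit_l hH z) (lin_sum (pi_linear n)) (lin_sum S_linear).
by apply: eq_bigr => p _; rewrite (linZ (pi_linear n)) (linZ S_linear).
Qed.

Lemma antipode_deg0 z : pi 0 z = z -> S z = eps z *: 1.
Proof. by move=> hz; have := antipode_homog hz; rewrite big_nil addr0. Qed.

Lemma antipode_homogE f n z : (n <= f)%N -> pi n z = z ->
  S z = \sum_(a <- comps f n) (-1) ^+ size a *: Xi a z.
Proof.
elim: f n z => [|f IH] [|n] z // nf hz.
1,2: by rewrite big_seq1 expr0 scale1r antipode_deg0.
have -> : S z =
    - \sum_(j <- iota 1 n.+1) \sum_(p <- delta z) pi j p.1 * S (pi (n.+1 - j) p.2).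
  by apply/eqP; rewrite -addr_eq0 (antipode_homog hz) (eps_graded hH _ hz) ?scale0r.
rewrite compsSS big_flatten big_map -sumrN; apply: eq_big_seq => j.
rewrite mem_iota => /andP [j1 jn]; rewrite add1n ltnS in jn.
have le_f : (n.+1 - j <= f)%N by lia.
rewrite big_map; under [RHS]eq_bigr do
  rewrite (xi_cons_homog _ hz jn) exprS mulN1r scaleNr.
rewrite sumrN; congr (- _).
under eq_bigr do rewrite (IH _ _ le_f (pi_idem _ _)) mulr_sumr.
rewrite exchange_big; apply: eq_bigr => c _; rewrite scaler_sumr.
by apply: eq_bigr => p _; rewrite scalerAr.
Qed.

Lemma antipode_homog_big m z (L : seq (seq nat)) :
  pi m z = z -> uniq L -> all is_comp L ->
  (forall a, is_comp a -> sumn a = m -> (-1) ^+ size a *: Xi a z != 0 -> a \in L) ->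
  S z = \sum_(a <- L) (-1) ^+ size a *: Xi a z.
Proof.
move=> hz uL cL covL; rewrite (antipode_homogE (leqnn m) hz).
have sumn_supp a : (-1) ^+ size a *: Xi a z != 0 -> sumn a = m.
  by apply: contraNeq => ne; rewrite (xi_homog_eq0 hz ne) scaler0.
apply: (big_eq_support (P := is_comp)) => //.
- exact: comps_uniq.
- by move=> a; rewrite mem_comps => /andP [].
- exact/allP.
- move=> a ca /sumn_supp sa.
  by rewrite mem_comps ca sa eqxx -sa comp_size_le_sumn.
- by move=> a ca ta; apply: covL => //; apply: sumn_supp.
Qed.

Lemma antipode_xi_fsum h :
  comp_fsum_eq (fun a => (-1) ^+ size a *: Xi a h) (S h).
Proof.
have [N [hN0 hN]] := pi_decomp hH h.
have supp a : (-1) ^+ size a *: Xi a h != 0 -> (sumn a < N)%N.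
  rewrite xi_pi_sumn; apply: contraNT; rewrite -leqNgt => le_N.
  by rewrite hN0 // (lin0 (xi_linear a)) scaler0.
split.
  exists (flatten [seq comps m m | m <- iota 0 N]) => a ca ta.
  apply/flattenP; exists (comps (sumn a) (sumn a)).
    by apply: map_f; rewrite mem_iota supp.
  by rewrite mem_comps ca eqxx comp_size_le_sumn.
move=> L uL cL covL; rewrite {1}hN (lin_sum S_linear).
transitivity (\sum_(m < N) \sum_(a <- L) (-1) ^+ size a *: Xi a (pi m h)).
  apply: eq_bigr => m _; apply: antipode_homog_big (pi_idem m h) uL cL _ => a ca sa.
  by rewrite -sa -xi_pi_sumn; apply: covL.
rewrite exchange_big; apply: eq_bigr => a _.
by rewrite -scaler_sumr -(lin_sum (xi_linear a)) -hN.
Qed.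

End CCGradedHopf.

Section QSymCounit.
Variable k : comNzRingType.

Lemma stuffle_cons x a y b : stuffle (x :: a) (y :: b) =
  [seq x :: s | s <- stuffle a (y :: b)] ++ [seq y :: s | s <- stuffle (x :: a) b]
  ++ [seq (x + y)%N :: s | s <- stuffle a b].
Proof. by []. Qed.

Lemma stuffles0 x a : stuffle (x :: a) [::] = [:: x :: a].
Proof. by []. Qed.

Lemma size_stuffle a b s : s \in stuffle a b -> (maxn (size a) (size b) <= size s)%N.
Proof.
elim: a b s => [|x a IHa] b s; first by rewrite mem_seq1 => /eqP ->; rewrite max0n.
elim: b s => [|y b IHb] s; first by rewrite stuffles0 mem_seq1 => /eqP ->; rewrite maxn0.
rewrite stuffle_cons !mem_cat => /or3P [] /mapP [t ht ->] /=.
- by have := IHa _ _ ht; rewrite /=; lia.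
- by have := IHb _ ht; rewrite /=; lia.
- by have := IHa _ _ ht; rewrite /=; lia.
Qed.

Lemma all_comp_stuffle a b : is_comp a -> is_comp b -> all is_comp (stuffle a b).
Proof.
elim: a b => [|x a IHa] b ca cb; first by rewrite /= cb.
elim: b cb => [|y b IHb] cb; first by rewrite stuffles0 /= andbT.
move: ca cb => /andP [x0 ca] /andP [y0 cb].
apply/allP => s; rewrite stuffle_cons !mem_cat => /or3P [] /mapP [t ht ->] /=.
- by rewrite x0 (allP (IHa (y :: b) ca _)) //= y0.
- by rewrite y0 (allP (IHb cb)).
- by rewrite addn_gt0 x0 (allP (IHa b ca cb)).
Qed.

Lemma M_at_e1_stuffle a b :
  \sum_(s <- stuffle a b) M_at_e1 k s = M_at_e1 k a * M_at_e1 k b.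
Proof.
have vanish s : s \in stuffle a b -> (1 < size a)%N || (1 < size b)%N ->
    M_at_e1 k s = 0.
  move=> /size_stuffle le_s gt1; rewrite /M_at_e1 leqNgt (leq_trans _ le_s) //.
  by rewrite leq_max.
have [ha|ha] := leqP (size a) 1; last first.
  by rewrite {2}/M_at_e1 leqNgt ha mul0r big1_seq // => s /vanish ->; rewrite ?ha.
have [hb|hb] := leqP (size b) 1; last first.
  by rewrite {3}/M_at_e1 leqNgt hb mulr0 big1_seq // => s /vanish ->; rewrite ?hb ?orbT.
clear vanish; case: a ha => [|x [|? ?]] // _; case: b hb => [|y [|? ?]] // _;
  by rewrite /= !(big_cons, big_nil) /M_at_e1 /= ?(mulr1, mul1r, addr0, add0r).
Qed.

Lemma epsP_mulQ (f g : qsym k) : epsP (mulQ f g) = epsP f * epsP g.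
Proof.
rewrite /epsP /mulQ big_flatten big_map mulr_suml; apply: eq_bigr => p _.
rewrite big_flatten big_map mulr_sumr; apply: eq_bigr => q _.
by rewrite big_map mulrACA -M_at_e1_stuffle mulr_sumr.
Qed.

Lemma epsP_M (b : seq nat) : epsP [:: (1 : k, b)] = M_at_e1 k b.
Proof. by rewrite /epsP big_seq1 mul1r. Qed.

Lemma epsP_sumQ (fs : seq (qsym k)) : epsP (sumQ fs) = \sum_(f <- fs) epsP f.
Proof. by rewrite /epsP /sumQ big_flatten. Qed.

Lemma epsP_coefQ (f : qsym k) (L : seq (seq nat)) :
  uniq L -> (forall p, p \in f -> p.2 \in L) ->
  epsP f = \sum_(g <- L) coefQ f g * M_at_e1 k g.
Proof.
move=> uL fL; rewrite /epsP /coefQ.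
under [RHS]eq_bigr do rewrite mulr_suml big_mkcond.
rewrite exchange_big /=; apply: eq_big_seq => p pf.
transitivity (\sum_(g <- L) if g == p.2 then p.1 * M_at_e1 k p.2 else 0).
  by rewrite big_if_eq // fL.
by apply: eq_bigr => g _; rewrite eq_sym; case: eqP => [->|]; rewrite ?mul0r.
Qed.

Lemma epsP_coefQ_nil (f : qsym k) (c : k) :
  (forall p, p \in f -> is_comp p.2) ->
  (forall g, is_comp g -> coefQ f g = if g == [::] then c else 0) ->
  epsP f = c.
Proof.
move=> cf hf; pose L := undup ([::] :: map snd f).
have uL : uniq L := undup_uniq _.
rewrite (epsP_coefQ uL) => [|p pf]; last by rewrite mem_undup in_cons map_f ?orbT.
transitivity (\sum_(g <- L) if g == [::] then c else 0); last first.
  by rewrite big_if_eq // mem_undup mem_head.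
apply: eq_big_seq => g.
rewrite mem_undup in_cons => /orP [/eqP ->|/mapP [p /cf cp ->]].
  by rewrite hf // /M_at_e1 mulr1.
by rewrite hf //; case: eqP => [->|_]; rewrite ?mul0r // /M_at_e1 mulr1.
Qed.

Lemma is_comp_take i a : is_comp a -> is_comp (take i a).
Proof. by move=> ca; apply/allP => x /mem_take; apply: (allP ca). Qed.

Lemma is_comp_drop i a : is_comp a -> is_comp (drop i a).
Proof. by move=> ca; apply/allP => x /mem_drop; apply: (allP ca). Qed.

Lemma epsP_antipode_rec (SQ : seq nat -> qsym k) a :
  is_QSym_antipode SQ -> is_comp a ->
  \sum_(i <- iota 0 (size a).+1) epsP (SQ (take i a)) * M_at_e1 k (drop i a)
  = (a == [::])%:R.
Proof.
move=> [cSQ [SQ_left _]] ca.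
pose F := sumQ [seq mulQ (SQ (take i a)) [:: (1, drop i a)] | i <- iota 0 (size a).+1].
transitivity (epsP F).
  by rewrite epsP_sumQ big_map; apply: eq_bigr => i _; rewrite epsP_mulQ epsP_M.
apply: epsP_coefQ_nil => [p|g cg]; last first.
  by rewrite SQ_left //; case: (a == [::]); case: (g == [::]).
move=> /flattenP [q /mapP [i _ ->]] /flattenP [r /mapP [u u_in ->]].
rewrite /= cats0 => /mapP [s s_in ->].
have cu : is_comp u.2 := allP (cSQ _ (is_comp_take i ca)) _ u_in.
exact: (allP (all_comp_stuffle cu (is_comp_drop i ca))).
Qed.

Lemma epsP_antipode (SQ : seq nat -> qsym k) a :
  is_QSym_antipode SQ -> is_comp a -> epsP (SQ a) = (-1) ^+ size a.
Proof.
move=> hSQ; move sa : (size a) => n; elim: n a sa => [|n IH] a sa ca.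
  move/size0nil: sa => a0; have := epsP_antipode_rec hSQ ca.
  by rewrite a0 big_seq1 /M_at_e1 /= mulr1.
have := epsP_antipode_rec hSQ ca; rewrite sa -addn2 iotaD big_cat /=.
rewrite big1_seq => [|i /andP [_]]; last first.
  rewrite mem_iota /M_at_e1 size_drop sa => lt_in.
  by rewrite (_ : (n.+1 - i <= 1)%N = false) ?mulr0 //; lia.
rewrite !big_cons big_nil addr0 add0r add0n IH ?size_takel ?sa ?is_comp_take //.
rewrite take_oversize ?sa // /M_at_e1 !size_drop sa subSn // !subnn /= !mulr1.
rewrite -size_eq0 sa addrC => /eqP; rewrite addr_eq0 => /eqP ->.
by rewrite exprS mulN1r.
Qed.

End QSymCounit.

Theorem corollary6p3 (k : comNzRingType) (H : comAlgType k)
  (delta : H -> seq (H * H)) (eps : H -> k) (S : H -> H) (pi : nat -> H -> H)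
  (hH : is_cc_graded_hopf delta eps S pi)
  (SQ : seq nat -> qsym k) (hSQ : is_QSym_antipode SQ) :
  forall h : H,
    comp_fsum_eq (fun alpha => epsP (SQ alpha) *: xi delta eps pi alpha h) (S h).
Proof.
move=> h; apply: eq_comp_fsum (antipode_xi_fsum hH h) => a ca.
by rewrite (epsP_antipode hSQ ca).
Qed.
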